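(* Let $f:\Gamma\to\Gamma$ be an irreducible, expanding graph map which is a homotopy equivalence. Then each stack $\mathcal{K}$ of $f$ has the form $\mathcal{K}=\{e,f(e),f^2(e),\dots,f^s(e)\}$ (as unoriented edges) for some edge $e$ and some $s\ge0$, where $e,f(e),\dots,f^{s-1}(e)$ are non-mixing and non-surplus and $f^s(e)$ is either mixing or surplus.
   Context: A graph $\Gamma$ is a finite 1-dimensional CW complex (multiple edges and loops allowed) with a chosen orientation on each edge; $\mathcal{E}\Gamma$ is the set of (positively oriented) edges, $\mathcal{E}^\pm\Gamma$ includes both orientations, $\bar e$ is the reverse of $e$, $\iota,\tau$ the endpoint maps. An edge path is a nonempty concatenation $u=e_1\cdots e_k$ with $\tau(e_i)=\iota(e_{i+1})$; $|u|=k$ (no cancellation); $u$ traverses $e$ if $e$ or $\bar e$ occurs in it. A graph map $f:\Gamma\to\Gamma$ consists of a vertex map $f_V$ and an edge path $f(e)$ for each $e\in\mathcal{E}^\pm\Gamma$ with $\iota(f(e))=f_V(\iota(e))$, $f(\bar e)=\overline{f(e)}$; powers are compositions; $f$ is regarded as a continuous map. The transition matrix $T(f)$ has $(i,j)$ entry the number of times $f(e_i)$ traverses $e_j$; $f$ is irreducible if $T(f)$ is an irreducible matrix and every vertex has valence at least $3$; $f$ is expanding if $|f^n(e)|\to\infty$ for every edge $e$. An edge $e\in\mathcal{E}\Gamma$ is mixing if $|f(e)|>1$. It is surplus if it is non-mixing and $f(e)\in\{f(u),\overline{f(u)}\}$ for some edge $u\in\mathcal{E}\Gamma$ with $u\notin\{e,\bar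 e\}$. For a non-mixing edge $e$, $f(e)$ is a single oriented edge, identified with its underlying unoriented edge. The stacks of $f$ are the equivalence classes of the equivalence relation on $\mathcal{E}\Gamma$ generated by $e\sim f(e)$ whenever $e$ is non-mixing and non-surplus. *)

From mathcomp Require Import all_boot.
Set Implicit Arguments. Unset Strict Implicit. Unset Printing Implicit Defensive.

(* An oriented edge is a pair (e,b),
   with b = true the positive orientation of e and b = false its reverse. *)
Section Graphs.
Variables (V E : finType) (iota tau : E -> V).

Definition oedge := (E * bool)%type.
Definition oiota (a : oedge) : V := if a.2 then iota a.1 else tau a.1.
Definition otau (a : oedge) : V := if a.2 then tau a.1 else iota a.1.
Definition flip (a : oedge) : oedge := (a.1, ~~ a.2).
Definition rev_path (p : seq oedge) : seq oedge := rev (map flip p).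

Definition walk (u : V) (p : seq oedge) (v : V) : bool :=
  if p is a :: p' then
    [&& oiota a == u, path (fun x y => otau x == oiota y) a p' & otau (last a p') == v]
  else u == v.

Definition edge_path (u : V) (p : seq oedge) (v : V) : bool := (p != [::]) && walk u p v.

Definition valence (v : V) : nat := #|[pred e | iota e == v]| + #|[pred e | tau e == v]|.

(* maps given by a vertex map and an image path for each positive edge;
   the image of a reversed edge is the reversed path *)
Definition apply_oe (mE : E -> seq oedge) (a : oedge) : seq oedge :=
  if a.2 then mE a.1 else rev_path (mE a.1).
Definition apply_path (mE : E -> seq oedge) (p : seq oedge) : seq oedge :=
  flatten (map (apply_oe mE) p).

Definition is_graph_map (mV : V -> V) (mE : E -> seq oedge) : Prop :=
  forall e, edge_path (mV (iota e)) (mE e) (mV (tau e)).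

Definition is_cmap (mV : V -> V) (mE : E -> seq oedge) : Prop :=
  forall e, walk (mV (iota e)) (mE e) (mV (tau e)).

Inductive htp : seq oedge -> seq oedge -> Prop :=
| htp_refl p : htp p p
| htp_sym p q : htp p q -> htp q p
| htp_trans p q r : htp p q -> htp q r -> htp p r
| htp_cancel p1 a p2 : htp (p1 ++ a :: flip a :: p2) (p1 ++ p2).

(* (free) homotopy of cellular maps h ~ k: vertex tracks alpha v from h v to
   k v such that h(e) alpha(tau e) ~ alpha(iota e) k(e) rel endpoints *)
Definition maps_homotopic (hV kV : V -> V) (hE kE : E -> seq oedge) : Prop :=
  exists alpha : V -> seq oedge,
    (forall v, walk (hV v) (alpha v) (kV v)) /\
    (forall e, htp (hE e ++ alpha (tau e)) (alpha (iota e) ++ kE e)).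

Definition id_edges (e : E) : seq oedge := [:: (e, true)].

Definition homotopy_equivalence (fV : V -> V) (fE : E -> seq oedge) : Prop :=
  exists (gV : V -> V) (gE : E -> seq oedge),
    is_cmap gV gE /\
    maps_homotopic (gV \o fV) id (apply_path gE \o fE) id_edges /\
    maps_homotopic (fV \o gV) id (apply_path fE \o gE) id_edges.

Definition transition (fE : E -> seq oedge) (i j : E) : nat :=
  count (fun a : oedge => a.1 == j) (fE i).

Fixpoint tpow (T : E -> E -> nat) (n : nat) (i j : E) : nat :=
  match n with
  | 0 => (i == j : nat)
  | n'.+1 => \sum_(k : E) tpow T n' i k * T k j
  end.

Definition irreducible_matrix (T : E -> E -> nat) : Prop :=
  forall i j, exists n, 0 < n /\ 0 < tpow T n i j.

Definition irreducible_map (fE : E -> seq oedge) : Prop :=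
  irreducible_matrix (transition fE) /\ forall v, 3 <= valence v.

Definition fpow (fE : E -> seq oedge) (n : nat) (e : E) : seq oedge :=
  iter n (apply_path fE) [:: (e, true)].

Definition expanding (fE : E -> seq oedge) : Prop :=
  forall e M, exists N, forall n, N <= n -> M <= size (fpow fE n e).

Definition mixing (fE : E -> seq oedge) (e : E) : bool := 1 < size (fE e).

Definition surplus (fE : E -> seq oedge) (e : E) : bool :=
  ~~ mixing fE e &&
  [exists u : E, (u != e) && ((fE e == fE u) || (fE e == rev_path (fE u)))].

(* underlying unoriented edge of a (single-edge) path *)
Definition und (e0 : E) (p : seq oedge) : E := (head (e0, true) p).1.

Definition nmns (fE : E -> seq oedge) (e : E) : bool :=
  ~~ mixing fE e && ~~ surplus fE e.

Definition stack_rel (fE : E -> seq oedge) : rel E :=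
  fun e e' => (nmns fE e && (und e (fE e) == e')) || (nmns fE e' && (und e' (fE e') == e)).

Definition stack (fE : E -> seq oedge) (e : E) : {set E} :=
  [set e' | connect (stack_rel fE) e e'].

End Graphs.

From mathcomp Require Import all_boot.
Set Implicit Arguments. Unset Strict Implicit. Unset Printing Implicit Defensive.

(* For a non-mixing edge x, f(x) is a single edge [next_edge x], and along the
   non-surplus edges [next_edge] is injective, since two distinct edges with
   the same image (up to orientation) are surplus.  Expansion forces every
   orbit of [next_edge] to leave the non-mixing non-surplus edges, since
   otherwise f^n(x) would remain a single edge; this happens after
   [exit_time x] steps.  So the stack of an edge with no non-mixing
   non-surplus preimage is exactly its orbit up to its exit time, and every
   stack contains such an edge: one of maximal exit time. *)

Section Stacks.

Variables (V E : finType) (iota tau : E -> V).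
Variables (fV : V -> V) (fE : E -> seq (oedge E)).
Hypothesis f_graph_map : is_graph_map iota tau fV fE.

Definition next_edge (x : E) : E := und x (fE x).

Lemma nonmixing_image x : ~~ mixing fE x -> exists b, fE x = [:: (next_edge x, b)].
Proof.
rewrite /mixing /next_edge /und; have /andP[] := f_graph_map x.
by case: (fE x) => [|[a b] [|? ?]] //= _ _ _; exists b.
Qed.

Lemma next_edge_inj : {in nmns fE &, injective next_edge}.
Proof.
move=> x y /andP[mx sx] /andP[my _] exy; apply/eqP; apply: contraNT sx => nexy.
have [[b fx] [c fy]] := (nonmixing_image mx, nonmixing_image my).
rewrite /surplus mx; apply/existsP; exists y; rewrite eq_sym nexy fx fy -exy.
by case: b {fx}; case: c {fy}; rewrite /rev_path /flip /= ?eqxx ?orbT.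
Qed.

Lemma fpow_nonmixing_orbit x n :
    (forall i, i < n -> ~~ mixing fE (iter i next_edge x)) ->
  exists b, fpow fE n x = [:: (iter n next_edge x, b)].
Proof.
elim: n => [|n IHn] nm_orbit; first by exists true.
have [b fnx] := IHn (fun i lt_in => nm_orbit i (ltnW lt_in)).
have [c fy] := nonmixing_image (nm_orbit n (ltnSn n)).
rewrite /fpow iterS -/(fpow fE n x) fnx /apply_path /= /apply_oe /= fy cats0.
by case: b {fnx}; [exists c | exists (~~ c)].
Qed.

Lemma connect_stack_sym : connect_sym (stack_rel fE).
Proof. by apply: sym_connect_sym => x y; rewrite /stack_rel orbC. Qed.

Lemma connect_next_edge x : nmns fE x -> connect (stack_rel fE) x (next_edge x).
Proof. by move=> nmx; apply: connect1; rewrite /stack_rel nmx eqxx. Qed.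

Hypothesis f_expanding : expanding fE.

Lemma orbit_exits_nmns x : exists n, ~~ nmns fE (iter n next_edge x).
Proof.
have [N sizeN] := f_expanding x 2; have := sizeN N (leqnn N).
have [/forallP nm_orbit|/forallPn[i exit_i] _] :=
  boolP [forall i : 'I_N, nmns fE (iter i next_edge x)]; last by exists i.
have nm_iN i : i < N -> ~~ mixing fE (iter i next_edge x).
  by move=> lt_iN; have /andP[] := nm_orbit (Ordinal lt_iN).
by have [b ->] := fpow_nonmixing_orbit nm_iN.
Qed.

Definition exit_time x : nat := ex_minn (orbit_exits_nmns x).

Lemma exit_timeP x : ~~ nmns fE (iter (exit_time x) next_edge x).
Proof. by rewrite /exit_time; case: ex_minnP. Qed.

Lemma exit_time_min x n : ~~ nmns fE (iter n next_edge x) -> exit_time x <= n.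
Proof. by rewrite /exit_time; case: ex_minnP => m _; apply. Qed.

Lemma nmns_before_exit x i : i < exit_time x -> nmns fE (iter i next_edge x).
Proof. by apply: contraTT => /exit_time_min; rewrite -leqNgt. Qed.

Lemma exit_time_next_edge y : nmns fE y -> exit_time y = (exit_time (next_edge y)).+1.
Proof.
move=> nmy; apply/eqP; rewrite eqn_leq; apply/andP; split.
  by apply: exit_time_min; rewrite iterSr exit_timeP.
have := exit_timeP y; case: (exit_time y) => [|k]; first by rewrite nmy.
by rewrite iterSr => /exit_time_min.
Qed.

Definition exit_orbit x : {set E} :=
  [set iter i next_edge x | i : 'I_(exit_time x).+1].

Lemma exit_orbitP x y :
  reflect (exists2 i, i <= exit_time x & y = iter i next_edge x) (y \in exit_orbit x).
Proof.
apply: (iffP imsetP) => [[i _ ->]|[i le_is ->]]; first by exists i => //; rewrite -ltnS.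
by exists (Ordinal (le_is : i < (exit_time x).+1)).
Qed.

Lemma exit_orbit_closed x :
    (forall y, nmns fE y -> next_edge y != x) ->
  closed (stack_rel fE) (exit_orbit x).
Proof.
move=> no_pred; set s := exit_time x.
suff step y z : stack_rel fE y z -> y \in exit_orbit x -> z \in exit_orbit x.
  by move=> y z yz; apply/idP/idP; apply: step; rewrite // /stack_rel orbC.
move=> yz /exit_orbitP[i le_is def_y]; apply/exit_orbitP; subst y.
case/orP: yz => /andP[nm /eqP]; rewrite -/(next_edge _) => gz.
  have lt_is : i < s.
    by rewrite ltn_neqAle le_is andbT; apply: contraTneq nm => ->; exact: exit_timeP.
  by exists i.+1; rewrite // -gz iterS.
case: i le_is gz => [|i] le_is gz; first by have := no_pred z nm; rewrite gz eqxx.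
exists i; first exact: ltnW.
by apply: next_edge_inj; [exact: nm | exact: nmns_before_exit | rewrite gz iterS].
Qed.

Lemma stack_exit_orbit x :
  (forall y, nmns fE y -> next_edge y != x) -> stack fE x = exit_orbit x.
Proof.
move=> no_pred; apply/setP => y; rewrite inE; apply/idP/idP => [xy|].
  rewrite -(closed_connect (exit_orbit_closed no_pred) xy).
  by apply/exit_orbitP; exists 0.
case/exit_orbitP=> i; elim: i y => [|i IHi] y le_is ->; first exact: connect0.
rewrite iterS; apply: connect_trans (IHi _ (ltnW le_is) erefl) _.
exact/connect_next_edge/nmns_before_exit.
Qed.

Lemma stack_has_top e0 :
  exists2 e, stack fE e0 = stack fE e & forall y, nmns fE y -> next_edge y != e.
Proof.
have [e e0e max_e] :=
  @arg_maxnP _ e0 (connect (stack_rel fE) e0) exit_time (connect0 _ e0).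
exists e.
  apply/setP => y; rewrite !inE; apply/idP/idP; last exact: connect_trans.
  by apply: connect_trans; rewrite connect_stack_sym.
move=> y nmy; apply/eqP => gy.
have e0y : connect (stack_rel fE) e0 y.
  by apply: connect_trans e0e _; rewrite connect_stack_sym -gy connect_next_edge.
have : exit_time y <= exit_time e := max_e y e0y.
by rewrite (exit_time_next_edge nmy) gy ltnn.
Qed.

End Stacks.

Theorem lemma3p1 (V E : finType) (iota tau : E -> V)
    (fV : V -> V) (fE : E -> seq (oedge E)) :
  is_graph_map iota tau fV fE ->
  irreducible_map iota tau fE ->
  expanding fE ->
  homotopy_equivalence iota tau fV fE ->
  forall e0 : E,
    exists (e : E) (s : nat),
      (forall i, i <= s -> size (fpow fE i e) = 1) /\
      (forall i, i < s -> nmns fE (und e (fpow fE i e))) /\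
      (mixing fE (und e (fpow fE s e)) || surplus fE (und e (fpow fE s e))) /\
      stack fE e0 = [set und e (fpow fE (nat_of_ord i) e) | i : 'I_s.+1].
Proof.
move=> f_graph_map _ f_expanding _ e0.
have [e -> top_e] := stack_has_top f_graph_map f_expanding e0.
set s := exit_time f_graph_map f_expanding e.
have fpow_e i : i <= s -> exists b, fpow fE i e = [:: (iter i (next_edge fE) e, b)].
  move=> le_is; apply: fpow_nonmixing_orbit => // j lt_ji.
  exact: (andP (nmns_before_exit (leq_trans lt_ji le_is))).1.
have und_fpow_e i : i <= s -> und e (fpow fE i e) = iter i (next_edge fE) e.
  by case/fpow_e=> b ->.
exists e, s; split; first by move=> i /fpow_e[b ->].
split.
  by move=> i lt_is; rewrite und_fpow_e; [exact: nmns_before_exit lt_is | exact: ltnW].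
split.
  have := exit_timeP f_graph_map f_expanding e.
  by rewrite und_fpow_e // negb_and !negbK.
rewrite (stack_exit_orbit f_graph_map) //; apply: eq_imset => i.
by rewrite und_fpow_e // -ltnS.
Qed.
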